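(* Let $n \ge m \ge 2$ be integers and let $K_{n,m}$ be the complete bipartite graph with parts of sizes $n$ and $m$. (i) If $n$ is even, then $\mathrm{sg_e}(K_{n,m}) = n+1$ if $n=m$, and $\mathrm{sg_e}(K_{n,m}) = n$ if $n \ge m+1$. (ii) If $n$ is odd, then $\mathrm{sg_e}(K_{n,m}) = n+2$ if $n=m$, $\mathrm{sg_e}(K_{n,m}) = n+1$ if $n=m+1$, and $\mathrm{sg_e}(K_{n,m}) = n$ if $n \ge m+2$.
   Context: All graphs are finite, simple and connected. A set $S \subseteq V(G)$ is a strong edge geodetic set of $G$ if one can assign to every unordered pair $\{u,v\}$ of distinct vertices of $S$ either one shortest $u,v$-path $P_{uv}$ in $G$ or no path, in such a way that every edge of $G$ lies on at least one of the assigned paths. The strong edge geodetic number $\mathrm{sg_e}(G)$ is the minimum cardinality of a strong edge geodetic set of $G$. *)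

From mathcomp Require Import all_boot.
Set Implicit Arguments. Unset Strict Implicit. Unset Printing Implicit Defensive.

(* A simple graph: vertex type T (finType), adjacency e : rel T,
   assumed symmetric and irreflexive. A u,v-walk is represented by its vertex
   sequence x :: q with path e x q. *)

Definition shortest_path (T : finType) (e : rel T) (u v : T) (s : seq T) : Prop :=
  exists x q, s = x :: q /\ path e x q /\ [set x; last x q] = [set u; v] /\
    (forall r, path e x r -> last x r = last x q -> size q <= size r).

Definition edge_on (T : finType) (s : seq T) (a b : T) : bool :=
  has (fun xy => ((xy.1 == a) && (xy.2 == b)) || ((xy.1 == b) && (xy.2 == a)))
      (zip s (behead s)).

(* S is a strong edge geodetic set: to each unordered pair {u,v} of distinct
   vertices of S one assigns (via P applied to the 2-set [set u; v]) either one
   shortest u,v-path or none, such that every edge lies on an assigned path. *)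
Definition strong_edge_geodetic (T : finType) (e : rel T) (S : {set T}) : Prop :=
  exists P : {set T} -> option (seq T),
    (forall u v, u \in S -> v \in S -> u != v ->
       match P [set u; v] with
       | None => True
       | Some s => shortest_path e u v s
       end) /\
    (forall a b, e a b ->
       exists u v s, [/\ u \in S, v \in S, u != v,
                        P [set u; v] = Some s & edge_on s a b]).

Definition is_sge (T : finType) (e : rel T) (k : nat) : Prop :=
  (exists S : {set T}, strong_edge_geodetic e S /\ #|S| = k) /\
  (forall S : {set T}, strong_edge_geodetic e S -> k <= #|S|).

Definition Knm (n m : nat) : rel 'I_(n + m) :=
  fun i j => (i < n) != (j < n).
Arguments Knm : clear implicits.

From mathcomp Require Import all_boot zify.
Set Implicit Arguments. Unset Strict Implicit. Unset Printing Implicit Defensive.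

(* Every edge of a complete bipartite graph lies on a geodesic with one or two
   edges, so every edge has an endpoint in S and one whole side X lies in S.
   A vertex w of the other side that is missing from S is only reached by
   paths x-w-y with x, y in X; the pairs {x, y} used for w must cover X, so w
   needs at least |X|/2 (rounded up) pairs, and different missing vertices need
   different pairs.  Counting the |X|(|X|-1)/2 pairs shows that at most
   ncovers |X| vertices are missing, ncovers n being n-1 for even n and n-2 for
   odd n.  Conversely, a 1-factorisation of K_n (of K_(n-1) for odd n, with one
   extra edge per colour at the last vertex) splits the pairs of X into
   ncovers n edge covers, and each of them is routed through its own missing
   vertex. *)

Lemma shortest_path_set2 (T : finType) (e : rel T) (u v u' v' : T) s :
  [set u; v] = [set u'; v'] -> shortest_path e u v s -> shortest_path e u' v' s.
Proof. by move=> huv [x [q [-> [pq [hs hmin]]]]]; exists x, q; rewrite hs -huv. Qed.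

Lemma edge_on_sym (T : finType) (s : seq T) a b : edge_on s a b = edge_on s b a.
Proof. by apply: eq_has => xy; rewrite orbC. Qed.

Lemma edge_on_pair (T : finType) (x y a b : T) :
  edge_on [:: x; y] a b = ((x == a) && (y == b)) || ((x == b) && (y == a)).
Proof. by rewrite /edge_on /= orbF. Qed.

Lemma edge_on_triple (T : finType) (x z y a b : T) :
  edge_on [:: x; z; y] a b =
  [|| (x == a) && (z == b), (x == b) && (z == a),
      (z == a) && (y == b) | (z == b) && (y == a)].
Proof. by rewrite /edge_on /= orbF !orbA. Qed.

Lemma set2_sub (T : finType) (S : {set T}) (x y u v : T) :
  [set x; y] = [set u; v] -> u \in S -> v \in S -> (x \in S) && (y \in S).
Proof.
move=> h uS vS; have: x \in [set u; v] by rewrite -h set21.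
have: y \in [set u; v] by rewrite -h set22.
by rewrite !in_set2 => /orP [] /eqP -> /orP [] /eqP ->; rewrite ?uS ?vS.
Qed.

Lemma card_cover_pairs (T : finType) (F : {set {set T}}) (A : {set T}) :
  (forall Q, Q \in F -> #|Q| = 2) -> A \subset cover F -> uphalf #|A| <= #|F|.
Proof.
move=> F2 AF; rewrite leq_uphalf_double -muln2 -sum_nat_const -(eq_bigr _ F2).
exact: leq_trans (subset_leq_card AF) (leq_card_cover F).1.
Qed.

Lemma sum_card_fibres (aT rT : finType) (f : aT -> option rT) (D : {set aT})
    (W : {set rT}) :
  \sum_(w in W) #|[set x in D | f x == Some w]| <= #|D|.
Proof.
under eq_bigr do rewrite -sum1dep_card.
rewrite (exchange_big_dep (mem D)) /=; last by move=> w x _ /andP [].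
rewrite -sum1_card; apply: leq_sum => x _; rewrite sum1dep_card.
apply: leq_trans (subset_leq_card (_ : _ \subset [set w | f x == Some w])) _.
  by apply/subsetP => w; rewrite !inE => /and3P [].
case: (f x) => [w0|]; last by rewrite eq_card0 // => w; rewrite inE.
rewrite -(cards1 w0) subset_leq_card //.
by apply/subsetP => w; rewrite !inE => /eqP [->].
Qed.

Lemma set2_ord_inj N (i j i' j' : 'I_N) : i < j -> i' < j' ->
  [set i; j] = [set i'; j'] -> i = i' /\ j = j'.
Proof.
move=> ij ij' h.
have: i \in [set i'; j'] by rewrite -h set21.
have: j \in [set i'; j'] by rewrite -h set22.
rewrite !in_set2 => /orP [] /eqP ej /orP [] /eqP ei; subst => //.
- by rewrite ltnn in ij.
- by have := ltn_trans ij ij'; rewrite ltnn.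
- by rewrite ltnn in ij.
Qed.

Definition ncovers n := if odd n then n.-2 else n.-1.

Lemma leq_ncovers n c : 0 < n -> c * uphalf n <= 'C(n, 2) -> c <= ncovers n.
Proof.
rewrite bin2 /ncovers uphalf_half; have := odd_double_half n.
set k := n./2; case: (odd n) => /= <-.
  rewrite -doubleMr half_double; nia.
rewrite -doubleMl half_double; nia.
Qed.

Lemma ncovers_homo : {homo ncovers : m n / m <= n}.
Proof.
move=> m n; rewrite leq_eqVlt => /predU1P [-> // | mn].
by rewrite /ncovers; case: ifP; case: ifP => _ _; lia.
Qed.

Lemma ncovers_le n : ncovers n <= n.
Proof. by rewrite /ncovers; case: ifP => _; lia. Qed.

Lemma card_ord_lt N k : k <= N -> #|[set i : 'I_N | i < k]| = k.
Proof. by move=> kN; rewrite -sum1dep_card (big_ord_narrow kN) sum1_card card_ord. Qed.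

Section CompleteBipartite.
Variables (T : finType) (p : pred T) (e : rel T).
Hypothesis e_parts : forall x y, e x y = (p x != p y).

Lemma shortest_path_edge u v : e u v -> shortest_path e u v [:: u; v].
Proof.
move=> euv; exists u, [:: v]; do 3?split; rewrite /= ?euv //.
by case=> [/= _ vu | //]; rewrite vu e_parts eqxx in euv.
Qed.

Lemma shortest_path_length2 u w v : p u = p v -> u != v -> e u w -> e w v ->
  shortest_path e u v [:: u; w; v].
Proof.
move=> puv uv euw ewv; exists u, [:: w; v]; do 3?split; rewrite /= ?euw ?ewv //.
case=> [/= _ vu | z [/= | //]]; first by rewrite vu eqxx in uv.
by rewrite andbT e_parts => puz zv; rewrite zv -puv eqxx in puz.
Qed.

Lemma shortest_path_shape a b u v s : e a b -> u != v -> shortest_path e u v s ->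
  exists x y, [set x; y] = [set u; v] /\
    (s = [:: x; y] \/ exists2 z, s = [:: x; z; y] & e x z && e z y).
Proof.
move=> eab uv [x [q [-> [pq [hs hmin]]]]]; set y := last x q in hs hmin.
have short : size q <= 2.
  have [exy | nexy] := boolP (e x y).
    by have := hmin [:: y]; rewrite /= exy => /(_ isT erefl) /leqW.
  have [z pz] : exists z, p z != p x.
    by have [pax|] := eqVneq (p a) (p x); [exists b; rewrite -pax eq_sym -e_parts | exists a].
  apply: (hmin [:: z; y]) => //=; rewrite andbT.
  by move: nexy pz; rewrite !e_parts; case: (p x) (p y) (p z) => [] [] [].
clear hmin; move: short pq hs; rewrite {}/y; case: q => [|z [|y [|? ?]]] //=.
- by move=> _ _ hs; have := cards2 u v; rewrite -hs setUid cards1 uv.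
- by move=> _ _ hs; exists x, z; split; [|left].
- by rewrite andbT => _ exzy hs; exists x, y; split; [|right; exists z].
Qed.

Section Assignment.
Variables (S : {set T}) (P : {set T} -> option (seq T)).
Hypothesis P_shortest : forall u v, u \in S -> v \in S -> u != v ->
  match P [set u; v] with None => True | Some s => shortest_path e u v s end.
Hypothesis P_covers : forall a b, e a b ->
  exists u v s, [/\ u \in S, v \in S, u != v, P [set u; v] = Some s & edge_on s a b].

Lemma edge_on_assigned a b : e a b -> exists x y, [/\ x \in S, y \in S, x != y &
  (P [set x; y] = Some [:: x; y] /\ edge_on [:: x; y] a b) \/
  exists2 z, P [set x; y] = Some [:: x; z; y] & [&& e x z, e z y & edge_on [:: x; z; y] a b]].
Proof.
move=> eab; have [u [v [s [uS vS uv Puv eon]]]] := P_covers eab.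
have := P_shortest uS vS uv; rewrite Puv => /(shortest_path_shape eab uv).
move=> [x [y [hxy shape]]]; exists x, y.
have /andP [xS yS] := set2_sub hxy uS vS.
have xy : x != y by have := cards2 x y; rewrite hxy cards2 uv; case: eqP.
rewrite hxy Puv; split => //; case: shape eon => [-> | [z -> /andP [exz ezy]]] eon.
  by left.
by right; exists z; rewrite ?exz ?ezy.
Qed.

Lemma assigned_vertex_cover a b : e a b -> (a \in S) || (b \in S).
Proof.
move=> /edge_on_assigned [x [y [xS yS _ [[_] | [z _ /and3P [_ _]]]]]].
  by rewrite edge_on_pair => /orP [] /andP [/eqP <- /eqP <-]; rewrite ?xS ?yS ?orbT.
by rewrite edge_on_triple => /or4P [] /andP [/eqP <- /eqP <-]; rewrite ?xS ?yS ?orbT.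
Qed.

Let pairs := [set Q : {set T} | Q \subset [set x | p x] & #|Q| == 2].
Let midpoint Q := if P Q is Some [:: _; z; _] then Some z else None.

Lemma midpoint_cover w a : ~~ p w -> w \notin S -> p a ->
  exists2 Q, (Q \in pairs) && (midpoint Q == Some w) & a \in Q.
Proof.
move=> pw wS pa; have eaw : e a w by rewrite e_parts pa (negbTE pw).
have [x [y [xS yS xy [[_] | [z Pxy /and3P [exz ezy hon]]]]]] := edge_on_assigned eaw.
  by rewrite edge_on_pair => /orP [] /andP [/eqP ? /eqP ?]; subst; rewrite ?xS ?yS in wS.
have /andP [/eqP zw ha] : (z == w) && ((a == x) || (a == y)).
  by move: hon; rewrite edge_on_triple => /or4P [] /andP [/eqP ? /eqP ?]; subst;
    rewrite ?xS ?yS ?eqxx ?orbT in wS *.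
subst z; exists [set x; y]; last by rewrite !inE.
rewrite !inE /midpoint Pxy eqxx cards2 xy !andbT; apply/subsetP => t.
by rewrite !inE => /orP [] /eqP ->; move: exz ezy;
  rewrite !e_parts (negbTE pw); case: (p x); case: (p y).
Qed.

Lemma card_missing_bound :
  #|[set x | ~~ p x] :\: S| * uphalf #|[set x | p x]| <= 'C(#|[set x | p x]|, 2).
Proof.
set X := [set x | p x]; set W := _ :\: S.
have fibre_large w : w \in W -> uphalf #|X| <= #|[set Q in pairs | midpoint Q == Some w]|.
  rewrite !inE => /andP [wS pw]; apply: card_cover_pairs.
    by move=> Q; rewrite /pairs !inE => /andP [/andP [_ /eqP]].
  apply/subsetP => a; rewrite inE => pa; have [Q hQ aQ] := midpoint_cover pw wS pa.
  by apply/bigcupP; exists Q => //; rewrite inE.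
rewrite -cards_draws -sum_nat_const; apply: leq_trans (sum_card_fibres midpoint pairs W).
exact: leq_sum.
Qed.
End Assignment.

Lemma sge_vertex_cover S a b : strong_edge_geodetic e S -> e a b -> (a \in S) || (b \in S).
Proof. by case=> P [P_shortest P_covers]; apply: (assigned_vertex_cover P_shortest P_covers). Qed.

Lemma sge_part_subset S : strong_edge_geodetic e S ->
  [set x | p x] \subset S \/ [set x | ~~ p x] \subset S.
Proof.
move=> hS; have [|/subsetPn [x]] := boolP ([set x | p x] \subset S); first by left.
rewrite inE => px xS; right; apply/subsetP => y; rewrite inE => py.
have exy : e x y by rewrite e_parts px (negbTE py).
by have := sge_vertex_cover hS exy; rewrite (negbTE xS).
Qed.

Lemma sge_card_lb S : strong_edge_geodetic e S -> [set x | p x] \subset S ->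
  0 < #|[set x | p x]| ->
  #|[set x | p x]| + (#|[set x | ~~ p x]| - ncovers #|[set x | p x]|) <= #|S|.
Proof.
move=> [P [P_shortest P_covers]] XS X0.
have missing := leq_ncovers X0 (card_missing_bound P_shortest P_covers).
have splitY := cardsID S [set x | ~~ p x].
have splitS := cardsID [set x | p x] S; rewrite (setIidPr XS) in splitS.
have : #|[set x | ~~ p x] :&: S| <= #|S :\: [set x | p x]|.
  by apply: subset_leq_card; apply/subsetP => x; rewrite !inE => /andP [-> ->].
lia.
Qed.
End CompleteBipartite.

(* The classical 1-factorisation of K_(N+1), N odd, with hub vertex [N]. *)
Definition round_robin N i j := if j == N then (2 * i) %% N else (i + j) %% N.

Lemma round_robin_partner N a c : odd N -> a <= N -> c < N ->
  exists2 a', a' <= N & (a' != a) && (round_robin N (minn a a') (maxn a a') == c).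
Proof.
move=> oN aN cN; rewrite /round_robin.
have [aN' | aNN] := ltnP a N.
  have [ac | ac] := eqVneq ((2 * a) %% N) c.
    exists N => //; rewrite (minn_idPl (ltnW aN')) (maxn_idPr (ltnW aN')).
    by rewrite !eqxx ac eqxx andbT neq_ltn aN' orbT.
  set a' := (c + (N - a)) %% N.
  have a'N : a' < N by rewrite ltn_pmod // (leq_ltn_trans _ cN).
  have sum_c : (a + a') %% N = c.
    by rewrite modnDmr addnCA subnKC ?modnDr ?modn_small ?(ltnW aN').
  exists a'; first exact: ltnW.
  have mx : maxn a a' < N by rewrite gtn_max aN'.
  rewrite (ltn_eqF mx) addn_min_max sum_c eqxx andbT.
  by apply: contra_neq ac => a'a; rewrite -sum_c a'a mul2n addnn.
have -> : a = N by apply/eqP; rewrite eqn_leq aN aNN.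
have N0 : 0 < N by case: (N) oN.
have h2 : 2 * uphalf N = N.+1 by rewrite mul2n odd_uphalfK.
exists ((c * uphalf N) %% N); first exact/ltnW/ltn_pmod.
have lt := ltn_pmod (c * uphalf N) N0.
rewrite (minn_idPr (ltnW lt)) (maxn_idPl (ltnW lt)) eqxx (ltn_eqF lt) /=.
by rewrite modnMmr mulnCA h2 mulnSr modnMDl modn_small.
Qed.

(* For odd [n] the last vertex gets the edge to [a] in colour [a]. *)
Definition colour n a b :=
  if odd n && (maxn a b == n.-1) then minn a b
  else round_robin (ncovers n) (minn a b) (maxn a b).

Lemma colour_sym n a b : colour n a b = colour n b a.
Proof. by rewrite /colour minnC maxnC. Qed.

Lemma colour_partner n a c : a < n -> c < ncovers n ->
  exists2 a', a' < n & (a' != a) && (colour n a a' == c).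
Proof.
rewrite /colour /ncovers; case: ifP => [on | en] an cN; last first.
  have oN : odd n.-1 by move: en cN; case: (n) => [|n'] //= /negbFE.
  have aN : a <= n.-1 by lia.
  have [a' a'n ha'] := round_robin_partner oN aN cN.
  by exists a' => //; lia.
have [-> | an1] := eqVneq a n.-1.
  exists c; first lia.
  by rewrite maxnC minnC (maxn_idPr _) ?(minn_idPl _) ?eqxx ?neq_ltn; lia.
have oN : odd n.-2 by move: on cN; case: (n) => [|[|n']] //= /negbNE.
have aN : a <= n.-2 by lia.
have [a' a'n /andP [a'a hc]] := round_robin_partner oN aN cN.
exists a'; first lia.
have mx : maxn a a' != n.-1 by lia.
by rewrite (negbTE mx) a'a.
Qed.

Section Construction.
Variables n m k : nat.
Hypothesis few_missing : m - k <= ncovers n.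

Local Notation V := 'I_(n + m).
Local Notation segment := [set x : V | x < n + k].

(* The vertex [n + k + c] of the second part, left out of the set, carries the
   paths of colour [c]; [i0] is only a default value. *)
Definition colour_vertex (i0 : V) c : V := insubd i0 (n + k + c).

Lemma colour_vertexE i0 c : c < m - k -> val (colour_vertex i0 c) = n + k + c.
Proof. by move=> cm; rewrite val_insubd; case: ifP => //; lia. Qed.

Definition Knm_path (i j : V) : option (seq V) :=
  if j < n then
    if colour n i j < m - k then Some [:: i; colour_vertex i (colour n i j); j] else None
  else if i < n then Some [:: i; j] else None.

Definition Knm_assign (Q : {set V}) : option (seq V) :=
  if [pick ij : V * V | (ij.1 < ij.2) && (Q == [set ij.1; ij.2])] is Some ij
  then Knm_path ij.1 ij.2 else None.

Lemma Knm_assign_set2 (i j : V) : i < j -> Knm_assign [set i; j] = Knm_path i j.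
Proof.
move=> ij; rewrite /Knm_assign; case: pickP => [[i' j'] /andP [/= ij' /eqP h] | none].
  by have [-> ->] := set2_ord_inj ij ij' h.
by have := none (i, j); rewrite /= ij eqxx.
Qed.

Lemma Knm_path_shortest (i j : V) : i < j ->
  match Knm_path i j with None => True | Some s => shortest_path (Knm n m) i j s end.
Proof.
move=> ij; rewrite /Knm_path; case: ifP => jn.
  case: ifP => // cm; set w := colour_vertex _ _.
  have wn : (w < n) = false by rewrite colour_vertexE //; lia.
  apply: (@shortest_path_length2 _ (fun x : V => x < n)) => //.
  - by rewrite jn (ltn_trans ij jn).
  - by rewrite neq_ltn ij.
  - by rewrite /Knm wn (ltn_trans ij jn).
  - by rewrite /Knm wn jn.
case: ifP => // ni; apply: (@shortest_path_edge _ (fun x : V => x < n)) => //.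
by rewrite /Knm ni jn.
Qed.

Lemma Knm_assign_shortest (u v : V) : u != v ->
  match Knm_assign [set u; v] with None => True | Some s => shortest_path (Knm n m) u v s end.
Proof.
move=> uv; have [i [j [ij huv]]] : exists i j : V, i < j /\ [set i; j] = [set u; v].
  case: (ltngtP u v) => [lt | gt | /val_inj eq]; first by exists u, v.
    by exists v, u; rewrite setUC.
  by rewrite eq eqxx in uv.
rewrite -huv Knm_assign_set2 //; have := Knm_path_shortest ij.
by case: Knm_path => // s; apply: shortest_path_set2.
Qed.

Lemma Knm_assign_cross (a b : V) : a < n -> n <= b -> exists u v s,
  [/\ u \in segment, v \in segment, u != v, Knm_assign [set u; v] = Some s & edge_on s a b].
Proof.
move=> an bn; have ab : a < b := leq_trans an bn.
have aS : a \in segment by rewrite inE; lia.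
have [bS | bS] := ltnP b (n + k).
  exists a, b, [:: a; b]; rewrite aS inE bS neq_ltn ab Knm_assign_set2 //.
  by rewrite /Knm_path (ltnNge b n) bn an edge_on_pair !eqxx.
have cm : b - n - k < m - k by have := ltn_ord b; lia.
have [a' a'n /andP [a'a /eqP hc]] := colour_partner an (leq_trans cm few_missing).
pose a2 : V := Ordinal (leq_trans a'n (leq_addr m n)).
have a2S : a2 \in segment by rewrite inE /=; lia.
have wb i0 : colour_vertex i0 (b - n - k) = b.
  by apply: val_inj; rewrite colour_vertexE /=; have := ltn_ord b; lia.
have [lt | gt | /val_inj eq] := ltngtP a a2.
- exists a, a2, [:: a; b; a2]; rewrite Knm_assign_set2 // /Knm_path a'n hc wb.
  by rewrite cm edge_on_triple !eqxx neq_ltn lt.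
- exists a2, a, [:: a2; b; a]; rewrite Knm_assign_set2 // /Knm_path an colour_sym hc cm wb.
  by rewrite edge_on_triple !eqxx !orbT neq_ltn gt.
- by move: a'a; rewrite eq /= eqxx.
Qed.

Lemma Knm_segment_sge : strong_edge_geodetic (Knm n m) segment.
Proof.
exists Knm_assign; split => [u v _ _ | a b]; first exact: Knm_assign_shortest.
rewrite /Knm; case: (ltnP a n) => an; case: (ltnP b n) => bn //= _.
  exact: Knm_assign_cross.
have [u [v [s [uS vS uv Puv hon]]]] := Knm_assign_cross bn an.
by exists u, v, s; rewrite edge_on_sym.
Qed.
End Construction.

Lemma sge_Knm_lb n m S : 0 < m <= n -> strong_edge_geodetic (Knm n m) S ->
  n + (m - ncovers n) <= #|S|.
Proof.
move=> /andP [m0 mn] hS; pose p (i : 'I_(n + m)) := i < n.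
have cardX : #|[set i | p i]| = n by rewrite card_ord_lt ?leq_addr.
have cardY : #|[set i | ~~ p i]| = m.
  have -> : [set i | ~~ p i] = ~: [set i | p i] by apply/setP => i; rewrite !inE.
  by have := cardsC [set i | p i]; rewrite card_ord cardX; lia.
have Knm_p : forall x y, Knm n m x y = (p x != p y) by [].
have Knm_np : forall x y, Knm n m x y = (~~ p x != ~~ p y).
  by move=> x y; rewrite Knm_p; case: (p x); case: (p y).
have [XS | YS] := sge_part_subset Knm_p hS.
  by have := sge_card_lb Knm_p hS XS; rewrite cardX cardY; lia.
have := sge_card_lb Knm_np hS YS; rewrite cardY.
have -> : [set x | ~~ ~~ p x] = [set x | p x] by apply/setP => x; rewrite !inE negbK.
by rewrite cardX; have := ncovers_homo mn; have := ncovers_le m; lia.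
Qed.

Lemma sge_Knm n m : 0 < m <= n -> is_sge (Knm n m) (n + (m - ncovers n)).
Proof.
move=> hmn; split; last by move=> S; apply: sge_Knm_lb.
exists [set x : 'I_(n + m) | x < n + (m - ncovers n)]; split.
  by apply: Knm_segment_sge; lia.
by rewrite card_ord_lt //; lia.
Qed.

Theorem mainTheorem1 (n m : nat) (hm : 2 <= m) (hmn : m <= n) :
  (~~ odd n ->
     (n = m -> is_sge (Knm n m) n.+1) /\
     (m.+1 <= n -> is_sge (Knm n m) n)) /\
  (odd n ->
     (n = m -> is_sge (Knm n m) n.+2) /\
     (n = m.+1 -> is_sge (Knm n m) n.+1) /\
     (m.+2 <= n -> is_sge (Knm n m) n)).
Proof.
have := @sge_Knm n m; rewrite /ncovers => /(_ ltac:(lia)) hsge.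
split=> [ev | od]; rewrite ?(negbTE ev) ?od /= in hsge.
  split=> h; move: hsge.
    by rewrite (_ : n + (m - n.-1) = n.+1) //; lia.
  by rewrite (_ : n + (m - n.-1) = n) //; lia.
split; [|split] => h; move: hsge.
- by rewrite (_ : n + (m - n.-2) = n.+2) //; lia.
- by rewrite (_ : n + (m - n.-2) = n.+1) //; lia.
- by rewrite (_ : n + (m - n.-2) = n) //; lia.
Qed.
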